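(* Let $k\ge 4$ and let $w$ be a word over $\{a,b\}$. Let $p$ be an occurrence of $u=ba^{k-1}$ and $q$ an occurrence of $v=b^{k-1}a$ in $w$ that are consecutive ($p$ before $q$), with sets of forbidden local positions $F_p$ and $F_q$, and suppose $|F_p|=|F_q|$. Suppose $F_q=\{0,i,i+1,\dots,k-2\}$ for some $2\le i\le k-2$, and suppose $F_p$ is a single cyclic block, i.e. $F_p=\{c,c+1,\dots,c+m-1\}$ with all elements taken modulo $k$, for some $c\in\{0,\dots,k-1\}$ and $m\ge 1$. Then either $F_p=\{0,1\}\cup\{i+2,i+3,\dots,k-1\}$ or $F_p=\{0\}\cup\{i+1,i+2,\dots,k-1\}$.
   Context: $\Sigma=\{a,b\}$. $S_k=\left(\Sigma^k\setminus\{ba^{k-1},b^{k-1}a\}\right)\cup\left(\Sigma^{k-1}\setminus\{a^{k-1},b^{k-1}\}\right)$, $u=ba^{k-1}$, $v=b^{k-1}a$. $\mathit{Pref}(S^* )$ denotes the set of prefixes of words in $S^*$. For $w=w_1\cdots w_n$, $w[i..j]=w_i\cdots w_j$ (empty if $i>j$). A position $j$, $0\le j\le n-1$, is forbidden in $w$ if $w[j+1..n]\notin\mathit{Pref}(S_k^* )$. An occurrence of $p\in\{u,v\}$ in $w$ is an index $s$ with $w[s+1..s+k]=p$; local position $i\in\{0,\dots,k-1\}$ is the position $s+i$ of $w$, and it is forbidden in the occurrence if $s+i$ is forbidden in $w$. Two occurrences of words from $\{u,v\}$ starting at $s<t$ overlap if $t<s+k$; they are consecutive if either they overlap or they are the only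 occurrences of $u$ or $v$ lying inside the factor $w[s+1..t+k]$. *)

From mathcomp Require Import all_boot.
Set Implicit Arguments. Unset Strict Implicit. Unset Printing Implicit Defensive.

Definition la : bool := false.
Definition lb : bool := true.

Definition uw (k : nat) : seq bool := lb :: nseq k.-1 la.
Definition vw (k : nat) : seq bool := rcons (nseq k.-1 lb) la.

Definition inSk (k : nat) (x : seq bool) : bool :=
  ((size x == k) && (x != uw k) && (x != vw k))
  || ((size x == k.-1) && (x != nseq k.-1 la) && (x != nseq k.-1 lb)).

Definition in_star (S : pred (seq bool)) (w : seq bool) : Prop :=
  exists ws : seq (seq bool), all S ws /\ flatten ws = w.

Definition in_pref (S : pred (seq bool)) (w : seq bool) : Prop :=
  exists z : seq bool, in_star S (w ++ z).

(* position j (0 <= j <= n-1) is forbidden in w iff w[j+1..n] = drop j w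
   is not in Pref(S_k^* ) *)
Definition forbidden (k : nat) (w : seq bool) (j : nat) : Prop :=
  j < size w /\ ~ in_pref (inSk k) (drop j w).

(* occurrence of p at index s : w[s+1..s+k] = p (with k = size p) *)
Definition occ (w p : seq bool) (s : nat) : Prop :=
  take (size p) (drop s w) = p /\ s + size p <= size w.

Definition consecutive (k : nat) (w : seq bool) (s t : nat) : Prop :=
  s < t /\
  (t < s + k \/
   (forall r, s <= r -> r + k <= t + k ->
      (occ w (uw k) r \/ occ w (vw k) r) -> r = s \/ r = t)).

From mathcomp Require Import all_boot zify.

(* Let the occurrences p of ba^{k-1} and q of b^{k-1}a start at s and t.
   They do not overlap, and every length-k window strictly between them is in
   S_k, so a forbidden position j stays forbidden at j + k; and since the first factor of a parse has length k or k-1, a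
   boundary "forbidden at j-1, allowed at j" propagates as well: j + k stays
   allowed.  Shifting by multiples of k carries the local positions of p onto
   those of q through a rotation x |-> y + x (mod k).  Moreover ba^{k-2} is in
   S_k, so if local position 0 of p is forbidden, so is k-1.
   Hence the rotation maps F_p \ {0} into F_q = {0} u [i, k-2], and maps every
   allowed position preceded by a forbidden one outside F_q.  As 1 and k-1 are
   not in F_q, the image of a run of F_p is a run of F_q that does not wrap
   around; with |F_p| = k - i this forces F_p to contain 0 and k-1.  If F_p
   also contained 1 and 2, the boundary after its last element from the start
   would land on k-1, and then its first element c would land on i-1, which is
   not in F_q. *)

Lemma count_iota_itv a b n :
  count (fun x => a <= x < b) (iota 0 n) = minn b n - a.
Proof.
elim: n => [|n IHn]; first by rewrite minn0.
by rewrite -addn1 iotaD count_cat IHn /= addn0; lia.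
Qed.

Lemma count_iota_itvU a1 b1 a2 b2 n : b1 <= a2 ->
  count (fun x => (a1 <= x < b1) || (a2 <= x < b2)) (iota 0 n)
  = (minn b1 n - a1) + (minn b2 n - a2).
Proof.
move=> b1a2; rewrite -!count_iota_itv -count_predUI.
by rewrite (@eq_count _ (predI _ _) pred0) ?count_pred0 ?addn0 // => x /=; lia.
Qed.

Lemma card_set_ord_nat k (P : pred nat) :
  #|[set x : 'I_k | P (val x)]| = count P (iota 0 k).
Proof.
by rewrite cardsE cardE /enum_mem size_filter -enumT -val_enum_ord count_map.
Qed.

Lemma exists_addn_mul a b k : a <= b -> a = b %[mod k] -> exists q, b = a + q * k.
Proof.
move=> ab /eqP; rewrite eq_sym eqn_mod_dvd // => /divnK bak.
by exists ((b - a) %/ k); rewrite bak subnKC.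
Qed.

Definition cyc_block k c m : pred nat :=
  fun x => has (fun j => x == (c + j) %% k) (iota 0 m).

Definition vshape k i : pred nat := fun z => (z == 0) || (i <= z <= k - 2).

Lemma cyc_blockE k c m x : c < k -> x < k ->
  cyc_block k c m x = (c <= x < c + m) || (x + k < c + m).
Proof.
move=> ck xk; apply/hasP/idP => [[j] | x_in].
- rewrite mem_iota => /andP[_ jm] /eqP ->.
  case: (ltnP (c + j) k) => cjk; first by rewrite modn_small //; lia.
  have := leq_mod (c + j - k) k; rewrite -modnDr subnK //; lia.
- have [cx | xc] := leqP c x.
  + exists (x - c); first by rewrite mem_iota; lia.
    by rewrite subnKC // modn_small.
  + exists (x + k - c); first by rewrite mem_iota; lia.
    by rewrite subnKC; [rewrite modnDr modn_small | lia].
Qed.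

Lemma count_cyc_block k c m : c < k ->
  count (cyc_block k c m) (iota 0 k) = minn m k.
Proof.
move=> ck; have [mk | km] := leqP m k.
- rewrite (@eq_in_count _ _ (fun x => (0 <= x < c + m - k) || (c <= x < c + m)));
    last by move=> x; rewrite mem_iota => /andP[_ xk]; rewrite cyc_blockE //; lia.
  by rewrite count_iota_itvU; lia.
- rewrite (@eq_in_count _ _ predT) ?count_predT ?size_iota; first lia.
  by move=> x; rewrite mem_iota => /andP[_ xk]; rewrite cyc_blockE //=; lia.
Qed.

Lemma count_vshape k i : 0 < i < k ->
  count (vshape k i) (iota 0 k) = k - i.
Proof.
move=> ik; rewrite (@eq_count _ _ (fun z => (0 <= z < 1) || (i <= z < k.-1))).
  by rewrite count_iota_itvU; lia.
by move=> z; rewrite /vshape; lia.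
Qed.

Lemma vshape_run k i z n : 1 < i -> 1 < k -> z < k ->
    (forall j, j <= n -> vshape k i ((z + j) %% k)) ->
  (z = 0 /\ n = 0) \/ (i <= z /\ z + n <= k - 2).
Proof.
move=> i1 k1 zk; elim: n => [|n IHn] run.
  by have := run 0 (leqnn 0); rewrite addn0 modn_small // /vshape; lia.
have [[z0 n0]|[iz zn]] := IHn (fun j jn => run j (leqW jn)).
  by have := run 1 _; rewrite z0 n0 add0n modn_small /vshape; lia.
by have := run n.+1 (leqnn _); rewrite modn_small /vshape; lia.
Qed.

Lemma size_uw k : 0 < k -> size (uw k) = k.
Proof. by move=> k0; rewrite /= size_nseq prednK. Qed.

Lemma size_vw k : 0 < k -> size (vw k) = k.
Proof. by move=> k0; rewrite size_rcons size_nseq prednK. Qed.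

Lemma nth_uw k j : nth la (uw k) j = (j == 0).
Proof. by case: j => //= j; rewrite nth_nseq if_same. Qed.

Lemma nth_vw k j : nth la (vw k) j = (j < k.-1).
Proof. by rewrite nth_rcons size_nseq nth_nseq; case: (j < k.-1); rewrite ?if_same. Qed.

Lemma occ_nth (x0 : bool) {w p s j} : occ w p s -> j < size p ->
  nth x0 w (s + j) = nth x0 p j.
Proof. by move=> [pE _] jp; rewrite -nth_drop -pE nth_take. Qed.

Lemma occ_uw_vw_far k w s t : 1 < k ->
  occ w (uw k) s -> occ w (vw k) t -> s < t -> s + k <= t.
Proof.
move=> k1 ou ov st; rewrite leqNgt; apply/negP => tsk.
have u_t : nth la w t = la.
  by rewrite -(subnKC (ltnW st)) (occ_nth _ ou) ?size_uw ?nth_uw /la; lia.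
have v_t : nth la w t = lb.
  by rewrite -[t]addn0 (occ_nth _ ov) ?size_vw ?nth_vw /lb; lia.
by rewrite u_t in v_t.
Qed.

Lemma gap_window_inSk k w s t j : 1 < k -> consecutive k w s t ->
  s + k <= t -> t + k <= size w -> s < j < t -> inSk k (take k (drop j w)).
Proof.
move=> k1 [_ [|only_st]] skt tkw sjt; first lia.
have no_occ : ~ (occ w (uw k) j \/ occ w (vw k) j).
  by move=> occj; have := only_st j _ _ occj; lia.
have wsz : size (take k (drop j w)) = k by rewrite size_takel // size_drop; lia.
rewrite /inSk wsz eqxx /=; apply/orP; left.
apply/andP; split; apply/eqP => wE; apply: no_occ; [left | right];
  by split; rewrite ?size_uw ?size_vw ?wE //; lia.
Qed.

Lemma in_pref_cat (S : pred (seq bool)) x y :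
  S x -> in_pref S y -> in_pref S (x ++ y).
Proof.
move=> Sx [z [ws [Sws wsE]]]; exists z, (x :: ws).
by rewrite /= Sx Sws wsE catA.
Qed.

Lemma in_pref_head {S : pred (seq bool)} {w} :
    (forall y, S y -> size y <= size w) -> w != [::] -> in_pref S w ->
  exists2 y, S y & take (size y) w = y /\ in_pref S (drop (size y) w).
Proof.
move=> Ssz wn0 [z [[|y ws] [/= Sws wsE]]]; first by case: w {Ssz} wn0 wsE.
case/andP: Sws => Sy Sws; exists y => //.
have yE : take (size y) w = y.
  by rewrite -(takel_cat z (Ssz y Sy)) -wsE take_size_cat.
split=> //; exists z, ws; split=> //.
rewrite -(drop_size_cat (flatten ws) (erefl (size y))) wsE.
by rewrite -[w in LHS](cat_take_drop (size y)) -catA yE drop_size_cat.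
Qed.

Lemma inSk_size k y : inSk k y -> size y = k \/ size y = k.-1.
Proof. by case/orP => /andP[/andP[/eqP -> _] _]; [left | right]. Qed.

Lemma forbidden_cat k w j L : inSk k (take L (drop j w)) -> j + L < size w ->
  forbidden k w j -> forbidden k w (j + L).
Proof.
move=> Sx jLw [_ nPj]; split=> // Pj; apply: nPj.
by rewrite -(cat_take_drop L (drop j w)) drop_drop; apply: in_pref_cat; rewrite // addnC.
Qed.

Lemma forbidden_cross k w j :
  forbidden k w (j + k.-1) -> forbidden k w (j + k) -> forbidden k w j.
Proof.
move=> [_ nP1] [jkw nP2]; split=> [|Pj]; first lia.
have Ssz y : inSk k y -> size y <= size (drop j w).
  by move/inSk_size; rewrite size_drop; lia.
have wn0 : drop j w != [::].
  by rewrite -size_eq0 -lt0n size_drop subn_gt0 (leq_ltn_trans (leq_addr k j) jkw).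
have [y /inSk_size ysz [_]] := in_pref_head Ssz wn0 Pj.
by rewrite drop_drop addnC; case: ysz => ->.
Qed.

Lemma forbidden_start k w s : 2 < k -> occ w (uw k) s ->
  forbidden k w s -> forbidden k w (s + k.-1).
Proof.
move=> k2 [uE skw]; rewrite size_uw in uE skw; try lia.
apply: forbidden_cat; last lia.
rewrite -(take_takel _ (leq_pred k)) uE.
have [n ->] : exists n, k = n.+3 by exists (k - 3); lia.
rewrite /uw /inSk /= size_takel; first by rewrite eqxx orbT.
by rewrite /= size_nseq.
Qed.

Section Transfer.

Variables (k s t y : nat) (bad : nat -> Prop).
Hypothesis k_gt0 : 0 < k.
Hypothesis far : s + k <= t.
Hypothesis y_offset : (y + (t - s)) %% k = 0.
Hypothesis bad_shift : forall j, s < j < t -> bad j -> bad (j + k).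
Hypothesis bad_cross : forall j, bad (j + k.-1) -> bad (j + k) -> bad j.

Lemma bad_shiftn q j : s < j -> j + q * k < t + k -> bad j -> bad (j + q * k).
Proof.
elim: q j => [|q IHq] j sj jqt bj; first by rewrite addn0.
rewrite mulSn addnA; apply: IHq; [lia | lia | apply: bad_shift => //; lia].
Qed.

Lemma good_shiftn q j : s < j -> bad j -> ~ bad j.+1 ->
  j.+1 + q * k < t + k -> ~ bad (j.+1 + q * k).
Proof.
move=> sj bj; elim: q => [|q IHq] gj1 jqt; first by rewrite addn0.
move=> bjq; apply: (IHq gj1); first by rewrite mulSn in jqt; lia.
apply: bad_cross.
  have -> : j.+1 + q * k + k.-1 = j + q.+1 * k by rewrite mulSn; lia.
  by apply: bad_shiftn => //; rewrite mulSn in jqt *; lia.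
by have -> : j.+1 + q * k + k = j.+1 + q.+1 * k by rewrite mulSn; lia.
Qed.

Lemma landing x : x < k -> exists q, s + x + q * k = t + (y + x) %% k.
Proof.
move=> xk; have [q ->] : exists q, t + (y + x) %% k = s + x + q * k.
  apply: exists_addn_mul; first lia.
  rewrite modnDmr (_ : t + (y + x) = s + x + (y + (t - s))); last lia.
  by rewrite -[in RHS]modnDmr y_offset addn0.
by exists q.
Qed.

Lemma transfer_bad x : 0 < x < k -> bad (s + x) -> bad (t + (y + x) %% k).
Proof.
move=> xk bx; have [q qE] := landing x (proj2 (andP xk)).
have := ltn_pmod (y + x) k_gt0; rewrite -qE => qk.
by apply: bad_shiftn => //; lia.
Qed.

Lemma transfer_good x : 1 < x < k -> bad (s + x.-1) -> ~ bad (s + x) ->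
  ~ bad (t + (y + x) %% k).
Proof.
move=> xk bx1 gx; have [q qE] := landing x (proj2 (andP xk)).
have := ltn_pmod (y + x) k_gt0; rewrite -qE => qk.
have sx : s + x = (s + x.-1).+1 by lia.
by rewrite sx in gx qk *; apply: good_shiftn => //; lia.
Qed.

End Transfer.

Lemma forbidden_rotation k w s t : 1 < k ->
    occ w (uw k) s -> occ w (vw k) t -> consecutive k w s t ->
  exists y,
    (forall x, 0 < x < k -> forbidden k w (s + x) ->
       forbidden k w (t + (y + x) %% k)) /\
    (forall x, 1 < x < k -> forbidden k w (s + x.-1) -> ~ forbidden k w (s + x) ->
       ~ forbidden k w (t + (y + x) %% k)).
Proof.
move=> k2 ou ov cons; have k_gt0 : 0 < k by lia.
have far : s + k <= t by apply: occ_uw_vw_far ou ov (proj1 cons); lia.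
have tkw : t + k <= size w by case: ov; rewrite size_vw; lia.
have shift j : s < j < t -> forbidden k w j -> forbidden k w (j + k).
  by move=> sjt; apply: forbidden_cat; [apply: gap_window_inSk cons far tkw sjt; lia | lia].
(* [y] is [s - t] modulo [k] *)
have y_offset : ((k.-1 * (t - s)) %% k + (t - s)) %% k = 0.
  by rewrite modnDml addnC -mulSn prednK ?modnMr.
exists ((k.-1 * (t - s)) %% k).
split=> x xk.
  exact: (@transfer_bad _ _ _ _ _ k_gt0 far y_offset shift _ xk).
exact: (@transfer_good _ _ _ _ _ k_gt0 far y_offset shift (forbidden_cross k w) _ xk).
Qed.

Section BlockShape.

Variables k i c m y : nat.
Hypothesis i_gt1 : 1 < i.
Hypothesis i_le : i <= k - 2.
Hypothesis c_lt : c < k.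
Hypothesis mE : m = k - i.
Hypothesis block_to_vshape : forall x, 0 < x < k ->
  cyc_block k c m x -> vshape k i ((y + x) %% k).
Hypothesis block_start : cyc_block k c m 0 -> cyc_block k c m k.-1.
Hypothesis block_edge : forall x, 1 < x < k ->
  cyc_block k c m x.-1 -> ~~ cyc_block k c m x -> ~~ vshape k i ((y + x) %% k).

Lemma block_run x0 n : 0 < x0 -> x0 + n < k ->
    (forall j, j <= n -> cyc_block k c m (x0 + j)) ->
  ((y + x0) %% k = 0 /\ n = 0) \/ (i <= (y + x0) %% k /\ (y + x0) %% k + n <= k - 2).
Proof.
move=> x0_gt0 x0nk run; apply: vshape_run; [lia | lia | rewrite ltn_mod; lia |].
by move=> j jn; rewrite modnDml -addnA; apply: block_to_vshape; [lia | exact: run].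
Qed.

Lemma block_has0 : cyc_block k c m 0.
Proof.
apply: contraT => b0.
have [c_gt0 cmk] : 0 < c /\ c + m.-1 < k by move: b0; rewrite cyc_blockE; lia.
have run j : j <= m.-1 -> cyc_block k c m (c + j) by move=> jm; rewrite cyc_blockE; lia.
by have := @block_run c m.-1 c_gt0 cmk run; lia.
Qed.

Lemma block_wraps : k < c + m.
Proof. by have := block_start block_has0; have := block_has0; rewrite !cyc_blockE; lia. Qed.

Lemma block_shape :
  (forall x, x < k -> cyc_block k c m x = (x <= 1) || (i + 2 <= x)) \/
  (forall x, x < k -> cyc_block k c m x = (x == 0) || (i + 1 <= x)).
Proof.
have wrap := block_wraps.
have [b1 | [b2 | b3]] : c + m - k = 1 \/ c + m - k = 2 \/ 2 < c + m - k by lia.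
- by right=> x xk; rewrite cyc_blockE; lia.
- by left=> x xk; rewrite cyc_blockE; lia.
exfalso; have [b bE] : {b | b = c + m - k} by exists (c + m - k).
rewrite -bE in b3.
have b_lt : 1 < b < k by lia.
have c_lt' : 0 < c < k by lia.
have bk : 1 + (b - 2) < k by lia.
have run j : j <= b - 2 -> cyc_block k c m (1 + j) by move=> jb; rewrite cyc_blockE; lia.
have in_b1 : cyc_block k c m b.-1 by rewrite cyc_blockE; lia.
have out_b : ~~ cyc_block k c m b by rewrite cyc_blockE; lia.
have in_c : cyc_block k c m c by rewrite cyc_blockE; lia.
have [[_ ?] | [iz zb]] := @block_run 1 (b - 2) isT bk run; first lia.
have rot x : (y + x.+1) %% k = ((y + 1) %% k + x) %% k.
  by rewrite modnDml -addnA add1n.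
move: ((y + 1) %% k) iz zb rot => z iz zb rot.
have := block_edge _ b_lt in_b1 out_b.
have := rot b.-1; rewrite prednK; last lia.
move=> -> ; rewrite modn_small /vshape; last lia.
move=> zbk; have zc : z + c.-1 = i.-1 + k by lia.
have := block_to_vshape _ c_lt' in_c.
have := rot c.-1; rewrite prednK; last lia.
by move=> ->; rewrite zc modnDr modn_small /vshape; lia.
Qed.

End BlockShape.

Theorem lemma8 (k : nat) (w : seq bool) (s t : nat)
    (Fp Fq : {set 'I_k}) (i c m : nat) :
  4 <= k ->
  occ w (uw k) s ->
  occ w (vw k) t ->
  consecutive k w s t ->
  (forall x : 'I_k, x \in Fp <-> forbidden k w (s + x)) ->
  (forall x : 'I_k, x \in Fq <-> forbidden k w (t + x)) ->
  #|Fp| = #|Fq| ->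
  2 <= i -> i <= k - 2 ->
  Fq = [set x : 'I_k | (val x == 0) || ((i <= val x) && (val x <= k - 2))] ->
  c < k -> 1 <= m ->
  Fp = [set x : 'I_k | has (fun j => val x == (c + j) %% k) (iota 0 m)] ->
  Fp = [set x : 'I_k | (val x <= 1) || (i + 2 <= val x)] \/
  Fp = [set x : 'I_k | (val x == 0) || (i + 1 <= val x)].
Proof.
move=> k4 ou ov cons Fp_bad Fq_bad card_pq i2 ik FqE ck _ FpE.
have k_gt0 : 0 < k by lia.
have pP x : x < k -> cyc_block k c m x <-> forbidden k w (s + x).
  by move=> xk; move: (Fp_bad (Ordinal xk)); rewrite FpE inE.
have qP z : z < k -> vshape k i z <-> forbidden k w (t + z).
  by move=> zk; move: (Fq_bad (Ordinal zk)); rewrite FqE inE.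
have mE : m = k - i.
  move: card_pq; rewrite FpE FqE (card_set_ord_nat k (cyc_block k c m)).
  by rewrite (card_set_ord_nat k (vshape k i)) count_cyc_block // count_vshape; lia.
have [y [fwd bwd]] := @forbidden_rotation k w s t (ltnW (ltnW k4)) ou ov cons.
have rot_lt x : (y + x) %% k < k by rewrite ltn_mod.
have to_vshape x : 0 < x < k -> cyc_block k c m x -> vshape k i ((y + x) %% k).
  move=> xk /(pP x (proj2 (andP xk))) bx.
  by apply/(qP _ (rot_lt x)); apply: fwd.
have start : cyc_block k c m 0 -> cyc_block k c m k.-1.
  move=> /(pP 0 k_gt0); rewrite addn0 => /(@forbidden_start k w s (ltnW k4) ou) bs.
  by apply/(pP k.-1); [lia | exact: bs].
have edge x : 1 < x < k ->
    cyc_block k c m x.-1 -> ~~ cyc_block k c m x -> ~~ vshape k i ((y + x) %% k).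
  move=> xk /(pP x.-1) bx1 /negP gx; apply/negP => /(qP _ (rot_lt x)).
  by apply: bwd; [| apply: bx1; lia | move/(pP x (proj2 (andP xk)))].
have [shape | shape] := @block_shape k i c m y i2 ik ck mE to_vshape start edge;
  [left | right]; apply/setP => x; rewrite FpE !inE; exact: shape (ltn_ord x).
Qed.
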